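(* Let $n\ge 2$, let $c_1,\dots,c_n\ge 2$ be integers, let $d$ be prime, and let $f:\mathbb{Z}_{c_1}\times\cdots\times\mathbb{Z}_{c_n}\to\mathbb{Z}_d$ be any function. Then the distribution $$p(\mathbf{m}|\mathbf{s})=\begin{cases} d^{1-n} & \text{if } \sum_{j=1}^n m_j\equiv f(\mathbf{s}) \pmod d,\\ 0&\text{otherwise},\end{cases}$$ is non-signaling and satisfies $p\big(\sum_j m_j\equiv f(\mathbf{s})\,\big|\,\mathbf{s}\big)=1$ for every $\mathbf{s}$. Moreover, it is the unique non-signaling distribution $p(\mathbf{m}|\mathbf{s})$ satisfying $p\big(\sum_j m_j\equiv f(\mathbf{s})\,\big|\,\mathbf{s}\big)=1$ for all $\mathbf{s}$ if and only if $f$ is not bi-partite linear.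
   Context: A conditional distribution $p(\mathbf{m}|\mathbf{s})$ with $\mathbf{m}\in\mathbb{Z}_d^n$, $\mathbf{s}\in\prod_j\mathbb{Z}_{c_j}$ (nonnegative, summing to 1 over $\mathbf{m}$ for each $\mathbf{s}$) is non-signaling if for every subset $S\subseteq\{1,\dots,n\}$ the marginal distribution of the outcomes $(m_j)_{j\in S}$ depends only on $(s_j)_{j\in S}$. A bipartition $\{A,B\}$ of $\{1,\dots,n\}$ is a division into two disjoint non-empty sets with $A\cup B=\{1,\dots,n\}$. The function $f$ is bi-partite linear if there exists a bipartition $\{A,B\}$ and functions $f^A$ of $\mathbf{s}^A=(s_j)_{j\in A}$ and $f^B$ of $\mathbf{s}^B=(s_j)_{j\in B}$, valued in $\mathbb{Z}_d$, with $f(\mathbf{s})=f^A(\mathbf{s}^A)+f^B(\mathbf{s}^B)$ (mod $d$) for all $\mathbf{s}$. *)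

From HB Require Import structures.
From mathcomp Require Import all_boot all_order all_algebra.
Set Implicit Arguments. Unset Strict Implicit. Unset Printing Implicit Defensive.
Import Order.TTheory GRing.Theory Num.Theory.
Local Open Scope ring_scope.

Definition inputs (n : nat) (c : 'I_n -> nat) :=
  {dffun forall j : 'I_n, 'I_(c j)}.

Definition outputs (n d : nat) := {ffun 'I_n -> 'Z_d}.

Definition is_cond_dist (R : realFieldType) (n d : nat) (c : 'I_n -> nat)
  (p : outputs n d -> inputs c -> R) : Prop :=
  (forall m s, 0 <= p m s) /\ (forall s, \sum_(m : outputs n d) p m s = 1).

(* The marginal probability of
   the outcome pattern a|_S is the sum of p m s over the m agreeing with a on S. *)
Definition non_signaling (R : realFieldType) (n d : nat) (c : 'I_n -> nat)
  (p : outputs n d -> inputs c -> R) : Prop :=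
  forall (S : {set 'I_n}) (s s' : inputs c),
    (forall j, j \in S -> s j = s' j) ->
    forall a : outputs n d,
      \sum_(m : outputs n d | [forall j in S, m j == a j]) p m s
      = \sum_(m : outputs n d | [forall j in S, m j == a j]) p m s'.

Definition prob_sum_eq (R : realFieldType) (n d : nat) (c : 'I_n -> nat)
  (f : inputs c -> 'Z_d) (p : outputs n d -> inputs c -> R) (s : inputs c) : R :=
  \sum_(m : outputs n d | \sum_(j < n) m j == f s) p m s.

Definition depends_only_on (n : nat) (c : 'I_n -> nat) (T : Type)
  (A : {set 'I_n}) (g : inputs c -> T) : Prop :=
  forall s s' : inputs c, (forall j, j \in A -> s j = s' j) -> g s = g s'.

Definition bipartite_linear (n d : nat) (c : 'I_n -> nat) (f : inputs c -> 'Z_d) : Prop :=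
  exists A : {set 'I_n}, [/\ A != set0, ~: A != set0 &
    exists fA fB : inputs c -> 'Z_d,
      [/\ depends_only_on A fA, depends_only_on (~: A) fB &
          forall s, f s = fA s + fB s]].

Definition pf (R : realFieldType) (n d : nat) (c : 'I_n -> nat) (f : inputs c -> 'Z_d)
  (m : outputs n d) (s : inputs c) : R :=
  if \sum_(j < n) m j == f s then ((d%:R : R) ^+ n.-1)^-1 else 0.

From HB Require Import structures.
From mathcomp Require Import all_boot all_order all_algebra.
From mathcomp Require Import ring.
Set Implicit Arguments. Unset Strict Implicit. Unset Printing Implicit Defensive.
Import Order.TTheory GRing.Theory Num.Theory.
Local Open Scope ring_scope.

(* Both directions rest on one construction: for an additive map g on output
   patterns and a target h on inputs, the distribution uniform on the fiber
   {m | g m = h s}.  It is normalized, and it is non-signaling when every change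
   of the inputs outside a set S can be compensated by a translation of the
   outputs vanishing on S.  With g the total this is pf; if f = fA + fB across a
   bipartition {A, B}, the pair of side totals gives a second admissible
   distribution, different from pf.
   Conversely, for an admissible p, non-signaling makes p(.|s') a translate of
   p(.|s) whenever s, s' differ at one party.  The periods of p form a group, and
   going around a rectangle of inputs yields the period (e_k - e_l) times the
   second difference of f.  If all unit transfers e_i - e_j are periods, p is
   constant on the fibers of the total, hence equal to pf.  Otherwise the parties
   k with e_i - e_k a period form a set A across which, d being prime, every
   second difference of f vanishes; such an f splits as fA + fB. *)

Section InputPaths.
Variables (n : nat) (c : 'I_n -> nat).

Definition mix (X : {set 'I_n}) (s x : inputs c) : inputs c :=
  [ffun k => if k \in X then x k else s k].

Lemma mixE X s x k : mix X s x k = if k \in X then x k else s k.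
Proof. by rewrite ffunE. Qed.

Definition diff1 (s s' : inputs c) (i : 'I_n) := forall k, k != i -> s k = s' k.

Lemma diff1_mix s x i : diff1 s (mix [set i] s x) i.
Proof. by move=> k hk; rewrite mixE inE (negbTE hk). Qed.

(* Two inputs agreeing off X are joined by a path changing one party of X at a
   time; hence any property preserved by such single changes transfers. *)
Lemma transport_off (X : {set 'I_n}) (phi : inputs c -> Prop) :
  (forall s s' i, i \in X -> diff1 s s' i -> phi s -> phi s') ->
  forall s s' : inputs c, (forall k, k \notin X -> s k = s' k) -> phi s -> phi s'.
Proof.
move=> step s s'.
suff: forall N (s1 : inputs c), (#|[set k | s1 k != s' k]| <= N)%N ->
    (forall k, k \notin X -> s1 k = s' k) -> phi s1 -> phi s'.
  by move/(_ _ s (leqnn _)).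
elim=> [|N IH] s1 hN hX hs1.
  suff -> : s' = s1 by [].
  apply/ffunP=> k; apply/eqP; apply: contraT => hk.
  by move: hN; rewrite leqn0 cards_eq0 => /eqP/setP/(_ k); rewrite !inE eq_sym hk.
have [j /= hj | same] := pickP [pred k | s1 k != s' k]; last first.
  suff -> : s' = s1 by [].
  by apply/ffunP=> k; move/negbFE/eqP: (same k).
have jX : j \in X by apply: contraT => /hX e; rewrite e eqxx in hj.
apply: (IH (mix [set j] s1 s')); last by apply: (step s1 _ j jX _ hs1); exact: diff1_mix.
  rewrite -ltnS; apply: leq_trans hN; apply: proper_card; apply/properP; split.
    by apply/subsetP=> k; rewrite !inE mixE inE; case: (k == j); rewrite ?eqxx.
  by exists j; rewrite !inE ?mixE ?inE ?eqxx.
by move=> k hk; rewrite mixE inE; case: (k == j) => //; exact: hX.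
Qed.

Lemma depends_off (X : {set 'I_n}) (T : Type) (F : inputs c -> T) :
  (forall s s' i, i \in X -> diff1 s s' i -> F s = F s') -> depends_only_on (~: X) F.
Proof.
move=> step s s' hs.
have agree k : k \notin X -> s k = s' k by move=> hk; apply: hs; rewrite inE.
apply: (transport_off (phi := fun w => F s = F w) _ agree) => // w w' i iX hw ->.
exact: (step _ _ _ iX hw).
Qed.

End InputPaths.

Section Outputs.
Variables (n d : nat).
Implicit Types (m v : outputs n d) (X : {set 'I_n}).

Definition single (i : 'I_n) (t : 'Z_d) : outputs n d :=
  [ffun j => if j == i then t else 0].

Definition tot m : 'Z_d := \sum_(j < n) m j.
Definition psum X m : 'Z_d := \sum_(j in X) m j.

Lemma singleD i t u : single i (t + u) = single i t + single i u.
Proof. by apply/ffunP=> j; rewrite !ffunE; case: (j == i); rewrite ?addr0. Qed.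

Lemma single0 i : single i 0 = 0.
Proof. by apply/ffunP=> j; rewrite !ffunE; case: (j == i). Qed.

Lemma singleN i t : single i (- t) = - single i t.
Proof. by apply/ffunP=> j; rewrite !ffunE; case: (j == i); rewrite ?oppr0. Qed.

Lemma singleMn i t k : single i t *+ k = single i (t *+ k).
Proof. by apply/ffunP=> j; rewrite ffunMnE !ffunE; case: (j == i); rewrite ?mul0rn. Qed.

Lemma single_sum (I : finType) i (F : I -> 'Z_d) :
  \sum_k single i (F k) = single i (\sum_k F k).
Proof. exact/esym/(big_morph _ (singleD i) (single0 i)). Qed.

Lemma sum_single m : \sum_j single j (m j) = m.
Proof.
apply/ffunP=> k; rewrite sum_ffunE (bigD1 k) //= ffunE eqxx big1 ?addr0 //.
by move=> j hj; rewrite ffunE eq_sym (negbTE hj).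
Qed.

Lemma tot_add m v : tot (m + v) = tot m + tot v.
Proof. by rewrite /tot -big_split; apply: eq_bigr => j _; rewrite ffunE. Qed.

Lemma tot_opp m : tot (- m) = - tot m.
Proof. by rewrite /tot -sumrN; apply: eq_bigr => j _; rewrite ffunE. Qed.

Lemma psum_add X m v : psum X (m + v) = psum X m + psum X v.
Proof. by rewrite /psum -big_split; apply: eq_bigr => j _; rewrite ffunE. Qed.

Lemma psum_single X i t : psum X (single i t) = if i \in X then t else 0.
Proof.
rewrite /psum; case: ifP => iX.
  rewrite (bigD1 i) //= ffunE eqxx big1 ?addr0 // => j /andP [_ hj].
  by rewrite ffunE (negbTE hj).
by apply: big1 => j jX; rewrite ffunE; case: eqP => // ej; rewrite -ej jX in iX.
Qed.

Lemma tot_psum X m : tot m = psum X m + psum (~: X) m.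
Proof.
rewrite /tot /psum (bigID (mem X)) /=; congr (_ + _).
by apply: eq_bigl => j; rewrite in_setC.
Qed.

Lemma tot_single i t : tot (single i t) = t.
Proof. by rewrite (tot_psum [set i]) !psum_single !inE eqxx addr0. Qed.

Lemma psum_supported X m : (forall k, k \notin X -> m k = 0) ->
  psum X m = tot m /\ psum (~: X) m = 0.
Proof.
move=> hm; suff h0 : psum (~: X) m = 0 by rewrite (tot_psum X) h0 addr0.
by apply: big1 => k; rewrite in_setC => /hm.
Qed.

Lemma supported_output X (S : {set 'I_n}) (t : 'Z_d) : (X \subset S -> t = 0) ->
  exists v, [/\ forall k, k \in S -> v k = 0,
                forall k, k \notin X -> v k = 0 & tot v = t].
Proof.
case: (boolP (X \subset S)) => [sXS /(_ isT) -> | /subsetPn [j jX jS] _].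
  by exists 0; split=> [k|k|]; rewrite ?ffunE // /tot big1 // => k; rewrite ffunE.
exists (single j t); split=> [k kS|k kX|]; last exact: tot_single.
  by rewrite ffunE; case: eqP => // ek; move: jS; rewrite -ek kS.
by rewrite ffunE; case: eqP => // ek; move: kX; rewrite ek jX.
Qed.

Lemma agree_off m m' i :
  (forall j, j != i -> m' j = m j) -> m' = m + single i (m' i - m i).
Proof.
move=> h; apply/ffunP=> j; rewrite !ffunE.
case: (j =P i) => [->|/eqP nj]; first by rewrite addrC subrK.
by rewrite addr0 h.
Qed.

End Outputs.

Section UniformFiber.
Variables (R : realFieldType) (n d : nat) (c : 'I_n -> nat) (J : zmodType).
Variables (g : outputs n d -> J) (h : inputs c -> J).
Hypothesis g_add : forall m v, g (m + v) = g m + g v.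

Definition fiber_size (x : J) : R := \sum_(m | g m == x) 1.

Definition unif (K : R) (m : outputs n d) (s : inputs c) : R :=
  if g m == h s then K^-1 else 0.

Lemma g0 : g 0 = 0.
Proof. by apply: (addrI (g 0)); rewrite -g_add !addr0. Qed.

Lemma shift_fiber m v x y : g v = x - y -> (g (m + v) == x) = (g m == y).
Proof.
move=> gv; rewrite g_add gv; apply/eqP/eqP => [/(canRL (addrK _)) -> | ->].
  by rewrite opprB addrC subrK.
by rewrite addrC subrK.
Qed.

(* Translating by an element of the fiber over x - y maps the fiber over y
   onto the fiber over x; so all fibers in the image of g have the same size. *)
Lemma fiber_size_shift x y : (exists v, g v = x - y) -> fiber_size x = fiber_size y.
Proof.
case=> v gv; rewrite /fiber_size (reindex_inj (addIr v)) /=.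
by apply: eq_bigl => m; exact: shift_fiber.
Qed.

Lemma fiber_size_gt0 : 0 < fiber_size 0.
Proof.
rewrite /fiber_size (bigD1 (0 : outputs n d)) ?g0 //= ltr_pwDl ?ltr01 //.
by apply: sumr_ge0 => m _; exact: ler01.
Qed.

Lemma unif_ns (K : R) :
  (forall (S : {set 'I_n}) (s s' : inputs c), (forall j, j \in S -> s j = s' j) ->
     exists2 v : outputs n d, (forall j, j \in S -> v j = 0) & g v = h s - h s') ->
  non_signaling (unif K).
Proof.
move=> hv S s s' hS a; have [v v0 gv] := hv S s s' hS.
rewrite (reindex_inj (addIr v)) /=; apply: eq_big => [m | m _].
  apply: eq_forallb => j; rewrite ffunE.
  by case: (boolP (j \in S)) => //= /v0 ->; rewrite addr0.
by rewrite /unif (shift_fiber _ gv).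
Qed.

Section Normalized.
Variable K : R.
Hypothesis K_fiber : fiber_size 0 = K.
Hypothesis h_image : forall s, exists v, g v = h s.

Lemma K_neq0 : K != 0.
Proof. by rewrite -K_fiber gt_eqF ?fiber_size_gt0. Qed.

Lemma fiber_size_image s : fiber_size (h s) = K.
Proof.
have [v gv] := h_image s; rewrite -K_fiber; apply: fiber_size_shift.
by exists v; rewrite subr0.
Qed.

Lemma unif_sum s : \sum_m unif K m s = 1.
Proof.
rewrite -big_mkcond /= -[K^-1]mulr1 -mulr_sumr.
by rewrite -/(fiber_size _) fiber_size_image mulVf ?K_neq0.
Qed.

Lemma unif_cond : is_cond_dist (unif K).
Proof.
split=> [m s|]; last exact: unif_sum.
rewrite /unif; case: ifP => // _.
by rewrite invr_ge0 -K_fiber ltW ?fiber_size_gt0.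
Qed.

Lemma unif_event (P : pred (outputs n d)) s : (forall m, g m == h s -> P m) ->
  \sum_(m | P m) unif K m s = 1.
Proof.
move=> hP; rewrite -(unif_sum s) big_mkcond /=; apply: eq_bigr => m _.
by case: ifP => // nP; rewrite /unif; case: ifP => // /hP; rewrite nP.
Qed.

Lemma unif_unique (p : outputs n d -> inputs c -> R) : is_cond_dist p ->
  (forall m s, g m != h s -> p m s = 0) ->
  (forall m m' s, g m = g m' -> p m s = p m' s) ->
  forall m s, p m s = unif K m s.
Proof.
move=> [_ p1] p_off p_const m s; rewrite /unif.
case: eqP => [gm | /eqP gm]; last exact: p_off.
have : K * p m s = 1.
  rewrite -(p1 s) (bigID (fun m' => g m' == h s)) /= [X in _ = _ + X]big1; last first.
    by move=> m' /p_off.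
  rewrite addr0 (eq_bigr (fun _ => p m s * 1)) => [|m' /eqP gm']; last first.
    by rewrite mulr1; apply: p_const; rewrite gm gm'.
  by rewrite -mulr_sumr -/(fiber_size _) fiber_size_image mulrC.
by move/(canRL (mulKf K_neq0)); rewrite mulr1.
Qed.

End Normalized.
End UniformFiber.

Section TotalDistribution.
Variables (R : realFieldType) (n : nat) (c : 'I_n -> nat) (d : nat).
Variable f : inputs c -> 'Z_d.
Hypotheses (n_gt0 : (0 < n)%N) (d_gt1 : (1 < d)%N).

Lemma tot_onto (x : 'Z_d) : exists v : outputs n d, tot v = x.
Proof. by exists (single (Ordinal n_gt0) x); rewrite tot_single. Qed.

Lemma natr_d_neq0 : (d%:R : R) != 0.
Proof. by rewrite pnatr_eq0 -lt0n ltnW. Qed.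

(* The d equal fibers of the total partition the d^n output patterns. *)
Lemma fiber_size_tot : fiber_size R (@tot n d) 0 = d%:R ^+ n.-1.
Proof.
apply: (mulfI natr_d_neq0); rewrite -exprS prednK //.
transitivity (\sum_(m : outputs n d) (1 : R)).
  rewrite (partition_big (@tot n d) predT) //=.
  rewrite (eq_bigr (fun _ => fiber_size R (@tot n d) 0)).
    by rewrite sumr_const card_ord Zp_cast // mulr_natl.
  move=> x _; apply: fiber_size_shift; first exact: tot_add.
  by rewrite subr0; exact: tot_onto.
by rewrite sumr_const card_ffun !card_ord Zp_cast // natrX.
Qed.

Lemma pf_unif : pf R f = unif (@tot n d) f (d%:R ^+ n.-1).
Proof. by []. Qed.

Lemma pf_cond : is_cond_dist (pf R f).
Proof.
rewrite pf_unif.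
exact: (unif_cond (@tot_add n d) fiber_size_tot (fun s => tot_onto (f s))).
Qed.

Lemma pf_ns : non_signaling (pf R f).
Proof.
rewrite pf_unif; apply: unif_ns; first exact: tot_add.
move=> S s s' hS.
have all_fixed : [set: 'I_n] \subset S -> f s - f s' = 0.
  move=> sTS; suff -> : s = s' by rewrite subrr.
  by apply/ffunP=> j; apply: hS; apply: (subsetP sTS); rewrite inE.
by have [v [v0 _ vt]] := supported_output (d := d) all_fixed; exists v.
Qed.

Lemma pf_event s : prob_sum_eq f (pf R f) s = 1.
Proof.
rewrite pf_unif.
exact: (unif_event (@tot_add n d) fiber_size_tot (fun s => tot_onto (f s))).
Qed.

End TotalDistribution.

Section BipartiteCounterexample.
Variables (R : realFieldType) (n : nat) (c : 'I_n -> nat) (d : nat).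
Variable f : inputs c -> 'Z_d.
Variables (A : {set 'I_n}) (fA fB : inputs c -> 'Z_d).
Hypotheses (A_neq0 : A != set0) (B_neq0 : ~: A != set0).
Hypotheses (depA : depends_only_on A fA) (depB : depends_only_on (~: A) fB).
Hypothesis f_split : forall s, f s = fA s + fB s.

Definition side_tots (m : outputs n d) : 'Z_d * 'Z_d := (psum A m, psum (~: A) m).
Definition side_targets (s : inputs c) : 'Z_d * 'Z_d := (fA s, fB s).

Definition q : outputs n d -> inputs c -> R :=
  unif side_tots side_targets (fiber_size R side_tots 0).

Lemma side_tots_add m v : side_tots (m + v) = side_tots m + side_tots v.
Proof. by rewrite /side_tots !psum_add. Qed.

Lemma side_tots_onto (S : {set 'I_n}) (x y : 'Z_d) :
  (A \subset S -> x = 0) -> (~: A \subset S -> y = 0) ->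
  exists2 v : outputs n d, (forall j, j \in S -> v j = 0) & side_tots v = (x, y).
Proof.
move=> hx hy.
have [vA [vA0 vAout vAt]] := supported_output (d := d) hx.
have [vB [vB0 vBout vBt]] := supported_output (d := d) hy.
exists (vA + vB) => [j jS|]; first by rewrite ffunE vA0 ?vB0 ?addr0.
have [tA eA] := psum_supported vAout; have [tB eB] := psum_supported vBout.
rewrite setCK in eB; rewrite side_tots_add /side_tots tA eA tB eB vAt vBt.
by congr (_, _); rewrite /= ?addr0 ?add0r.
Qed.

Lemma side_free_A (x : 'Z_d) : A \subset set0 -> x = 0.
Proof. by rewrite subset0 (negbTE A_neq0). Qed.

Lemma side_free_B (y : 'Z_d) : ~: A \subset set0 -> y = 0.
Proof. by rewrite subset0 (negbTE B_neq0). Qed.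

Lemma side_tots_surj (x : 'Z_d * 'Z_d) : exists v, side_tots v = x.
Proof.
case: x => x y.
have [v _ vt] := @side_tots_onto set0 x y (side_free_A _) (side_free_B _).
by exists v.
Qed.

Lemma q_cond : is_cond_dist q.
Proof. exact: (unif_cond side_tots_add erefl (fun s => side_tots_surj _)). Qed.

Lemma q_ns : non_signaling q.
Proof.
apply: unif_ns; first exact: side_tots_add.
move=> S s s' hS.
apply: side_tots_onto => [AS | BS]; apply/eqP; rewrite subr_eq0; apply/eqP.
- by apply: depA => j /(subsetP AS); exact: hS.
- by apply: depB => j /(subsetP BS); exact: hS.
Qed.

Lemma q_event s : prob_sum_eq f q s = 1.
Proof.
apply: (unif_event side_tots_add erefl (fun s => side_tots_surj _)) => m /eqP [hA hB].
by rewrite -/(tot m) (tot_psum A) hA hB f_split.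
Qed.

(* q differs from pf R f: moving one unit of total from the complement of A to A
   keeps the total but leaves the support of q. *)
Lemma q_neq_pf (d_gt0 : (0 < d)%N) s0 : exists m, q m s0 != pf R f m s0.
Proof.
have [m _ hm] :=
  @side_tots_onto set0 (fA s0 + 1) (fB s0 - 1) (side_free_A _) (side_free_B _).
exists m; rewrite /q /unif /pf hm.
have -> : \sum_(j < n) m j = f s0.
  rewrite -/(tot m) (tot_psum A); case: hm => -> ->.
  by rewrite f_split addrACA subrr addr0.
rewrite eqxx /side_targets xpair_eqE -subr_eq0 addrAC subrr add0r oner_eq0 /=.
by rewrite eq_sym invr_eq0 expf_eq0 pnatr_eq0 gtn_eqF ?andbF.
Qed.

End BipartiteCounterexample.

Lemma rect_sides (V : zmodType) (a b c e : V) : a - b - c + e = 0 -> a - b = c - e.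
Proof. by move=> h; apply: subr0_eq; rewrite opprB addrA addrAC. Qed.

Lemma rect_swap (V : zmodType) (a b c e : V) : a - b = c - e -> a - c = b - e.
Proof.
by move=> h; rewrite -[a](subrK b) h addrAC [c - e - c]addrAC subrr add0r addrC.
Qed.

Section MixedDifferences.
Variables (n : nat) (c : 'I_n -> nat) (V : zmodType) (f : inputs c -> V).
Variable A : {set 'I_n}.

Hypothesis mixed0 : forall k l (s si sj sij : inputs c), k \in A -> l \notin A ->
  diff1 s si k -> diff1 si sij l -> diff1 s sj l -> diff1 sj sij k ->
  f sij - f si - f sj + f s = 0.

Lemma step_off_A l (x : inputs c) : l \notin A ->
  depends_only_on (~: A) (fun u => f (mix [set l] u x) - f u).
Proof.
move=> lA; apply: depends_off => w w' k kA hw.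
have hwx : diff1 (mix [set l] w x) (mix [set l] w' x) k.
  by move=> j hj; rewrite !mixE inE; case: (j =P l) => // _; exact: hw.
have := mixed0 kA lA hw (@diff1_mix _ _ w' x l) (@diff1_mix _ _ w x l) hwx.
by move/rect_sides/esym.
Qed.

Lemma mixed0_split (s0 s : inputs c) :
  f s = f (mix (~: A) s s0) + (f (mix A s s0) - f s0).
Proof.
pose F w := f w - f (mix A w s0).
have F_A : depends_only_on (~: ~: A) F.
  apply: depends_off => w w' l; rewrite inE => lA hw.
  have E1 : mix [set l] w w' = w'.
    by apply/ffunP => j; rewrite mixE inE; case: (j =P l) => [-> | /eqP /hw].
  have E2 : mix [set l] (mix A w s0) w' = mix A w' s0.
    apply/ffunP => j; rewrite !mixE inE; case: (j =P l) => [-> | /eqP /hw ->].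
      by rewrite (negbTE lA).
    by [].
  have agree : forall j, j \in ~: A -> w j = mix A w s0 j.
    by move=> j; rewrite in_setC mixE => /negbTE ->.
  have := @step_off_A l w' lA w (mix A w s0) agree.
  by rewrite /= E1 E2 /F => /rect_swap/esym.
have hF : F s = F (mix (~: A) s s0).
  by apply: F_A => j; rewrite setCK mixE in_setC => ->.
have E3 : mix A (mix (~: A) s s0) s0 = s0.
  by apply/ffunP => j; rewrite !mixE in_setC; case: (j \in A).
move/eqP: hF; rewrite /F E3 subr_eq => /eqP ->.
by rewrite -addrA [- _ + _]addrC.
Qed.

Lemma mixed0_bipartite (s0 : inputs c) : exists fA fB : inputs c -> V,
  [/\ depends_only_on A fA, depends_only_on (~: A) fB & forall s, f s = fA s + fB s].
Proof.
exists (fun s => f (mix (~: A) s s0)), (fun s => f (mix A s s0) - f s0); split.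
- move=> s s' hs; congr f; apply/ffunP => j; rewrite !mixE in_setC.
  by case: (boolP (j \in A)) => // /hs.
- move=> s s' hs; congr (f _ - _); apply/ffunP => j; rewrite !mixE.
  by case: (boolP (j \in A)) => // jA; apply: hs; rewrite in_setC.
- exact: mixed0_split.
Qed.

End MixedDifferences.

Lemma Zp_prime_inv (d : nat) (t : 'Z_d) : prime d -> t != 0 -> exists k, t *+ k = 1.
Proof.
move=> d_prime t0; have d_gt1 := prime_gt1 d_prime.
have t_unit : t \is a GRing.unit.
  rewrite -(natr_Zp t) unitZpE // prime_coprime // gtnNdvd //.
    by rewrite lt0n; apply: contraNneq t0 => ht; apply/eqP; exact: val_inj.
  by rewrite -[X in (_ < X)%N]Zp_cast // ltn_ord.
by exists (val t^-1); rewrite -mulr_natr natr_Zp mulrV.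
Qed.

Section Uniqueness.
Variables (R : realFieldType) (n : nat) (c : 'I_n -> nat) (d : nat).
Variables (f : inputs c -> 'Z_d) (p : outputs n d -> inputs c -> R).
Hypotheses (p_cond : is_cond_dist p) (p_ns : non_signaling p).
Hypothesis p_event : forall s, prob_sum_eq f p s = 1.
Implicit Types (m v : outputs n d) (s : inputs c).

Lemma p_off_fiber m s : tot m != f s -> p m s = 0.
Proof.
move=> hm; have [p_ge0 p1] := p_cond.
have : \sum_(m' : outputs n d | tot m' != f s) p m' s = 0.
  move: (p1 s); rewrite (bigID (fun m' => tot m' == f s)) /=.
  by rewrite [X in X + _]p_event -{2}(addr0 1) => /addrI.
by move/psumr_eq0P; apply=> // m' _; exact: p_ge0.
Qed.

(* Summing out party i: given the other outcomes of m, only one outcome of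
   party i completes them to the fiber over f s. *)
Lemma marginal_but_one i m s :
  \sum_(m' : outputs n d | [forall j in ~: [set i], m' j == m j]) p m' s
  = p (m + single i (f s - tot m)) s.
Proof.
set m0 := m + single i (f s - tot m).
have tot_m0 : tot m0 = f s by rewrite tot_add tot_single addrC subrK.
have m0_agree : [forall j in ~: [set i], m0 j == m j].
  apply/forall_inP => j; rewrite !inE => hj.
  by rewrite !ffunE (negbTE hj) addr0.
rewrite (bigD1 m0) //= big1 ?addr0 // => m' /andP [m'_agree m'_neq].
apply: p_off_fiber; apply: contra m'_neq => /eqP tot_m'; apply/eqP.
have off_i j : j != i -> m' j = m0 j.
  move=> hj; move/forall_inP: m'_agree => /(_ j); move/forall_inP: m0_agree => /(_ j).
  by rewrite !inE hj => /(_ isT)/eqP -> /(_ isT)/eqP.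
move: tot_m'; rewrite (agree_off off_i) tot_add tot_single tot_m0 => /eqP.
by rewrite -{2}[f s]addr0 => /eqP/addrI ->; rewrite single0 addr0.
Qed.

Lemma change_one_input s s' i : diff1 s s' i ->
  forall m, p m s' = p (m - single i (f s' - f s)) s.
Proof.
move=> hss' m.
have agree j : j \in ~: [set i] -> s j = s' j by rewrite !inE => /hss'.
have := p_ns agree m; rewrite !marginal_but_one.
case: (tot m =P f s') => [tot_m | /eqP tot_m].
  by rewrite tot_m subrr single0 addr0 => <-; rewrite -singleN opprB.
move=> _; rewrite [p m s']p_off_fiber // p_off_fiber // tot_add tot_opp tot_single.
by apply: contra tot_m => /eqP h; rewrite -(subrK (f s' - f s) (tot m)) h addrC subrK.
Qed.

Definition is_period v := forall s m, p (m + v) s = p m s.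
Definition periodb v :=
  [forall s : inputs c, [forall m : outputs n d, p (m + v) s == p m s]].

Lemma periodP v : reflect (is_period v) (periodb v).
Proof.
apply: (iffP forallP) => [h s m | h s]; first by move/forallP/(_ m)/eqP: (h s).
by apply/forallP => m; rewrite h.
Qed.

Lemma period_everywhere v s : (forall m, p (m + v) s = p m s) -> is_period v.
Proof.
move=> hs s'.
apply: (@transport_off _ _ setT (fun w => forall m, p (m + v) w = p m w) _ s) => //.
  move=> s1 s2 i _ h12 hs1 m.
  by rewrite (change_one_input h12) (change_one_input h12) addrAC hs1.
by move=> k; rewrite inE.
Qed.

Lemma period0 : is_period 0.
Proof. by move=> s m; rewrite addr0. Qed.

Lemma periodD v w : is_period v -> is_period w -> is_period (v + w).
Proof. by move=> hv hw s m; rewrite addrA hw hv. Qed.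

Lemma periodMn v k : is_period v -> is_period (v *+ k).
Proof.
move=> hv; elim: k => [|k IH]; first by rewrite mulr0n; exact: period0.
by rewrite mulrS; exact: periodD.
Qed.

Lemma period_sum (I : finType) (F : I -> outputs n d) :
  (forall i, is_period (F i)) -> is_period (\sum_i F i).
Proof. by move=> h; apply: big_ind => //; [exact: period0 | exact: periodD]. Qed.

Lemma period_square k l s sk sl skl :
  diff1 s sk k -> diff1 sk skl l -> diff1 s sl l -> diff1 sl skl k ->
  is_period (single k (f skl - f sk - f sl + f s) - single l (f skl - f sk - f sl + f s)).
Proof.
move=> h1 h2 h3 h4; apply: (@period_everywhere _ s) => w.
have paths m : p (m - single l (f skl - f sk) - single k (f sk - f s)) s
             = p (m - single k (f skl - f sl) - single l (f sl - f s)) s.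
  by rewrite -(change_one_input h1) -(change_one_input h2)
             -(change_one_input h3) -(change_one_input h4).
have := paths (w + single l (f sl - f s) + single k (f skl - f sl)).
rewrite addrK addrK => <-; congr p.
by apply/ffunP => j; rewrite !ffunE; case: (j == k); case: (j == l); ring.
Qed.

Lemma period_tot0 (n_gt0 : (0 < n)%N) :
  (forall i j, is_period (single i 1 - single j 1)) ->
  forall v, tot v = 0 -> is_period v.
Proof.
move=> transfers v v0; pose i0 := Ordinal n_gt0.
have -> : v = \sum_j (single j (v j) - single i0 (v j)).
  by rewrite sumrB single_sum -/(tot v) v0 single0 subr0 sum_single.
apply: period_sum => j; have := periodMn (val (v j)) (transfers j i0).
by rewrite mulrnBl !singleMn natr_Zp.
Qed.

(* Hence, when all unit transfers are periods, p is constant on the fibers of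
   the total, and therefore equal to pf R f. *)
Lemma unique_of_transfers (n_gt0 : (0 < n)%N) (d_gt1 : (1 < d)%N) :
  (forall i j, is_period (single i 1 - single j 1)) ->
  forall m s, p m s = pf R f m s.
Proof.
move=> transfers; rewrite pf_unif.
apply: (unif_unique (@tot_add n d) (fiber_size_tot R n_gt0 d_gt1)
                    (fun s => tot_onto n_gt0 (f s)) p_cond).
  by move=> m s; exact: p_off_fiber.
move=> m m' s tot_mm'.
have v0 : tot (m - m') = 0 by rewrite tot_add tot_opp tot_mm' subrr.
by have := period_tot0 n_gt0 transfers v0 s m'; rewrite [m' + _]addrC subrK.
Qed.

(* If some transfer i -> j is not a period, the set A of parties k for which the
   transfer i -> k is a period separates every rectangle with a nonzero second
   difference; so all mixed differences across A vanish and f is bi-partite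
   linear. *)
Lemma transfers_of_not_bipartite (d_prime : prime d) (s0 : inputs c) :
  ~ bipartite_linear f -> forall i j, is_period (single i 1 - single j 1).
Proof.
move=> not_bl i j; apply/periodP; apply: contraT => ij_free; case: not_bl.
pose A := [set k | periodb (single i 1 - single k 1)].
have iA : i \in A by rewrite inE; apply/periodP; rewrite subrr; exact: period0.
exists A; split; [by apply/set0Pn; exists i | by apply/set0Pn; exists j; rewrite !inE |].
apply: (@mixed0_bipartite _ _ _ f A _ s0) => k l s sk sl skl kA lA h1 h2 h3 h4.
apply/eqP; apply: contraNT lA => t0; rewrite inE; apply/periodP.
have [u tu] := Zp_prime_inv d_prime t0.
have := periodMn u (period_square h1 h2 h3 h4); rewrite mulrnBl !singleMn tu => kl.
by move: kA; rewrite inE => /periodP /periodD /(_ kl); rewrite addrA subrK.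
Qed.

End Uniqueness.

Unset Implicit Arguments. Set Strict Implicit. Set Printing Implicit Defensive.

Theorem theorem2 (R : realFieldType) (n : nat) (c : 'I_n -> nat) (d : nat)
  (hn : (2 <= n)%N) (hc : forall j, (2 <= c j)%N) (hd : prime d)
  (f : inputs c -> 'Z_d) :
  [/\ is_cond_dist (pf R f),
      non_signaling (pf R f),
      (forall s, prob_sum_eq f (pf R f) s = 1) &
      ((forall p : outputs n d -> inputs c -> R,
          is_cond_dist p -> non_signaling p ->
          (forall s, prob_sum_eq f p s = 1) ->
          forall m s, p m s = pf R f m s)
       <-> ~ bipartite_linear f)].
Proof.
have n_gt0 : (0 < n)%N by apply: leq_trans hn.
have d_gt1 := prime_gt1 hd.
pose s0 : inputs c := [ffun j => Ordinal (ltnW (hc j)) : 'I_(c j)].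
split; [exact: pf_cond | exact: pf_ns | exact: pf_event | split].
  move=> unique [A [A_neq0 B_neq0 [fA [fB [depA depB f_split]]]]].
  have [m] := q_neq_pf R A_neq0 B_neq0 f_split (ltnW d_gt1) s0.
  by rewrite unique ?eqxx //; [exact: q_cond | exact: q_ns | exact: q_event].
move=> not_bl p p_cond p_ns p_event.
apply: (unique_of_transfers p_cond p_event n_gt0 d_gt1).
exact: (transfers_of_not_bipartite p_cond p_ns p_event hd s0 not_bl).
Qed.
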